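(* Let $G=(V,E)$ be a finite, connected, non-complete undirected graph, and let $P$ be the distribution of a random vector $\mathbf X=(X_\alpha)_{\alpha\in V}$ that is perfectly Markov to $G$. Assume $d_2(G)\le |V|-2$. Then there exists $k\in\{1,\dots,|V|-2\}$ such that $d_2(G_k)\le k$ and $G=G_k$, where $G_k$ is the $k$-graph of $P$.
   Context: For a vertex $\alpha$, $d(\alpha\mid G)$ is the number of neighbours of $\alpha$ in $G$. The degree two of $\alpha$ is $d_2(\alpha\mid G)=|\{\gamma:\gamma\text{ adjacent to }\alpha,\ d(\gamma\mid G)\ge2\}|$, and $d_2(G)=\max_{\alpha\in V}d_2(\alpha\mid G)$. A set $S$ separates disjoint nonempty vertex sets $A,B$ in $G$ if every path from $A$ to $B$ meets $S$. Write $\mathbf X_S=(X_\gamma)_{\gamma\in S}$. $P$ satisfies the global Markov property w.r.t. $G$ if, for all disjoint $A,B,S\subseteq V$ with $A,B$ nonempty, $S$ separating $A,B$ implies $\mathbf X_A\perp\!\!\!\perp\mathbf X_B\mid\mathbf X_S$. $P$ is perfectly Markov to $G$ if it satisfies the global Markov property and, for all disjoint nonempty $A,B,S\subseteq V$, $\mathbf X_A\perp\!\!\!\perp\mathbf X_B\mid\mathbf X_S$ implies that $S$ separates $A$ and $B$ in $G$. For $k\in\{0,\dots,|V|-2\}$, the $k$-graph $G_k=(V,E_k)$ has distinct $\alpha,\beta$ non-adjacent iff there exists $S\subseteq V\setminus\{\alpha,\beta\}$ with $|S|=k$ and $X_\alpha\perp\!\!\!\perp X_\beta\mid\mathbf X_S$.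 *)

From mathcomp Require Import all_boot.
Set Implicit Arguments. Unset Strict Implicit. Unset Printing Implicit Defensive.

Section Graphs.
Variable V : finType.

Definition simple_graph (e : rel V) : Prop := symmetric e /\ irreflexive e.

Definition connected (e : rel V) : Prop := forall x y : V, connect e x y.

Definition complete (e : rel V) : Prop := forall x y : V, x != y -> e x y.

Definition deg (e : rel V) (x : V) : nat := #|[set y | e x y]|.

Definition deg2 (e : rel V) (x : V) : nat := #|[set y | e x y & 1 < deg e y]|.

Definition deg2G (e : rel V) : nat := \max_(x : V) deg2 e x.

Definition avoid (e : rel V) (S : {set V}) : rel V :=
  [rel x y | [&& e x y, x \notin S & y \notin S]].

(* S separates A and B: every path from A to B meets S, i.e. no path from
   a vertex of A to a vertex of B using only vertices outside S. *)
Definition separates (e : rel V) (S A B : {set V}) : Prop :=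
  forall a b, a \in A -> b \in B -> a \notin S -> b \notin S ->
    ~~ connect (avoid e S) a b.

(* CI A B S stands for  X_A _||_ X_B | X_S  for the distribution P. *)
Definition global_Markov (CI : {set V} -> {set V} -> {set V} -> bool)
  (e : rel V) : Prop :=
  forall A B S : {set V}, [disjoint A & B] -> [disjoint A & S] ->
    [disjoint B & S] -> A != set0 -> B != set0 ->
    separates e S A B -> CI A B S.

Definition perfectly_Markov (CI : {set V} -> {set V} -> {set V} -> bool)
  (e : rel V) : Prop :=
  global_Markov CI e /\
  forall A B S : {set V}, [disjoint A & B] -> [disjoint A & S] ->
    [disjoint B & S] -> A != set0 -> B != set0 -> S != set0 ->
    CI A B S -> separates e S A B.

Definition kgraph (CI : {set V} -> {set V} -> {set V} -> bool) (k : nat) : rel V :=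
  fun a b => (a != b) &&
    ~~ [exists S : {set V},
          [&& S \subset ~: [set a; b], #|S| == k & CI [set a] [set b] S]].

End Graphs.

From mathcomp Require Import all_boot.
From Stdlib Require Import FunctionalExtensionality.

Set Implicit Arguments.
Unset Strict Implicit.
Unset Printing Implicit Defensive.

(* Take k := max (d_2(G), 1).  We show that the k-graph of P
   coincides with G; then d_2(G_k) = d_2(G) <= k and we are done.
   - If a, b are adjacent in G, no nonempty S avoiding a and b separates them,
     so by perfect Markovness no such S (in particular none of size k >= 1)
     gives X_a _||_ X_b | X_S: a, b stay adjacent in G_k.
   - If a != b are not adjacent, the set N_2(a) of neighbours of a of degree at
     least 2 separates a from b: from a one can only step to a leaf attached
     to a, and from there only back to a.  Since #|N_2(a)| = d_2(a|G) <= k and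
     N_2(a) avoids a and b, it can be padded to a set S of size exactly k
     avoiding a and b (possible as k <= |V| - 2); S still separates a and b,
     so the global Markov property gives X_a _||_ X_b | X_S. *)

Lemma pad_subset (T : finType) (A U : {set T}) (m : nat) :
  A \subset U -> #|A| <= m <= #|U| ->
  exists B : {set T}, [/\ A \subset B, B \subset U & #|B| = m].
Proof.
move=> sAU /andP [leAm]; rewrite -(subnKC leAm).
move: (m - #|A|) => n {m leAm}.
elim: n A sAU => [|n IH] A sAU leU; first by exists A; rewrite addn0.
have /properP [_ [x xU xA]] : A \proper U.
  by rewrite properEcard sAU (leq_trans _ leU) // addnS ltnS leq_addr.
have cardxA : #|x |: A| = #|A|.+1 by rewrite cardsU1 xA.
have sxAU : x |: A \subset U by rewrite subUset sub1set xU sAU.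
have [|B [sxAB sBU cardB]] := IH (x |: A) sxAU; first by rewrite cardxA addSnnS.
exists B; rewrite cardB cardxA addSnnS; split=> //.
by apply: subset_trans sxAB; apply: subsetUr.
Qed.

Lemma pair_compl_disjoint (V : finType) (a b : V) (S : {set V}) :
  a != b -> S \subset ~: [set a; b] ->
  [/\ [disjoint [set a] & [set b]], [disjoint [set a] & S],
      [disjoint [set b] & S], a \notin S & b \notin S].
Proof.
move=> nab sS.
have aS : a \notin S by apply/negP => /(subsetP sS); rewrite !inE eqxx.
have bS : b \notin S by apply/negP => /(subsetP sS); rewrite !inE eqxx orbT.
by rewrite !disjoints1 inE nab aS bS.
Qed.

Section SimpleGraph.
Variables (V : finType) (e : rel V).
Hypotheses (esym : symmetric e) (eirr : irreflexive e).

Definition nonleaf_nbrs (a : V) : {set V} := [set y | e a y & 1 < deg e y].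

Lemma card_nonleaf_nbrs (a : V) : #|nonleaf_nbrs a| <= deg2G e.
Proof. exact: (leq_bigmax (F := deg2 e) a). Qed.

Lemma noncomplete_nonedge :
  ~ complete e -> exists a b : V, a != b /\ ~~ e a b.
Proof.
move=> ncomp.
have /existsP [a /existsP [b /andP [nab neab]]] :
    [exists a : V, exists b : V, (a != b) && ~~ e a b].
  apply: contra_notT ncomp => /existsPn noPair x y nxy.
  by move: (noPair x) => /existsPn /(_ y); rewrite nxy negbK.
by exists a, b.
Qed.

(* Two distinct non-adjacent vertices joined by a path force a third vertex. *)
Lemma connected_noncomplete_card :
  connected e -> ~ complete e -> 3 <= #|V|.
Proof.
move=> conn /noncomplete_nonedge [a [b [nab neab]]].
case/connectP: (conn a b) => [[|c p] /= /[swap] lastE].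
  by rewrite lastE eqxx in nab.
case/andP=> eac _.
have nca : c != a by apply: contraTneq eac => ->; rewrite eirr.
have ncb : c != b by apply: contraNneq neab => <-.
by rewrite (cardD1 a) (cardD1 b) (cardD1 c) !inE nca ncb eq_sym nab.
Qed.

(* Deleting N_2(a) (and possibly more) disconnects a from every vertex that
   is distinct from and not adjacent to a: the component of a in the remaining
   graph consists of a and leaves attached to a. *)
Lemma nonleaf_nbrs_separate (a b : V) (S : {set V}) :
  a != b -> ~~ e a b -> a \notin S -> b \notin S ->
  nonleaf_nbrs a \subset S -> ~~ connect (avoid e S) a b.
Proof.
move=> nab neab aS bS sNS.
pose near x := (x == a) || (e a x && (deg e x <= 1)).
have nearE x y : near x -> avoid e S x y -> near y.
  case/orP=> [/eqP -> | /andP [eax degx]] /and3P [exy _ yS].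
    apply/orP; right; rewrite exy leqNgt /=.
    by apply: contra yS => degy; apply: (subsetP sNS); rewrite inE exy.
  apply/orP; left; apply: contraLR degx => nya; rewrite -ltnNge.
  rewrite /deg (cardsD1 a) inE (esym x a) eax add1n ltnS card_gt0.
  by apply/set0Pn; exists y; rewrite !inE nya exy.
have nearPath p x : near x -> path (avoid e S) x p -> near (last x p).
  elim: p x => [|y p IH] x //= nx /andP [exy hp].
  exact: IH (nearE _ _ nx exy) hp.
apply/negP=> /connectP [p hp lastE].
have nearA : near a by rewrite /near eqxx.
move: (nearPath p a nearA hp).
by rewrite -lastE /near eq_sym (negbTE nab) (negbTE neab).
Qed.

Lemma separates_singletons (S : {set V}) (a b : V) :
  a \notin S -> b \notin S ->
  separates e S [set a] [set b] <-> ~~ connect (avoid e S) a b.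
Proof.
move=> aS bS; split=> [sep | nconn x y].
  exact: sep a b (set11 a) (set11 b) aS bS.
by rewrite !inE => /eqP -> /eqP ->.
Qed.

End SimpleGraph.

Section KGraph.
Variables (V : finType) (e : rel V) (CI : {set V} -> {set V} -> {set V} -> bool).
Hypotheses (esym : symmetric e) (eirr : irreflexive e).

(* Edges of G survive in every G_k with k >= 1: a nonempty set avoiding two
   adjacent vertices cannot separate them. *)
Lemma kgraph_edge (k : nat) (a b : V) :
  perfectly_Markov CI e -> 1 <= k -> e a b -> kgraph CI k a b.
Proof.
move=> [_ faithful] k1 eab.
have nab : a != b by apply: contraTneq eab => ->; rewrite eirr.
rewrite /kgraph nab; apply/existsP=> [[S /and3P [sS /eqP cardS ci]]].
have [dab daS dbS aS bS] := pair_compl_disjoint nab sS.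
have S0 : S != set0 by rewrite -card_gt0 cardS.
have ne1 (x : V) : [set x] != set0 by rewrite -card_gt0 cards1.
have := faithful _ _ _ dab daS dbS (ne1 a) (ne1 b) S0 ci.
move/(separates_singletons e aS bS)/negP; apply; apply: connect1.
by rewrite /avoid /= eab aS bS.
Qed.

(* Non-edges of G are non-edges of G_k as soon as d_2(G) <= k <= |V| - 2:
   pad N_2(a) to a separator of size k and apply the global Markov property. *)
Lemma kgraph_nonedge (k : nat) (a b : V) :
  global_Markov CI e -> deg2G e <= k <= #|V| - 2 ->
  ~~ e a b -> ~~ kgraph CI k a b.
Proof.
move=> markov /andP [d2k kV] neab.
have [<- | nab] := eqVneq a b; first by rewrite /kgraph eqxx.
have sNab : nonleaf_nbrs e a \subset ~: [set a; b].
  apply/subsetP=> y; rewrite !inE => /andP [eay _].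
  by apply/norP; split; apply: contraTneq eay => ->; rewrite ?eirr.
have cardN : #|nonleaf_nbrs e a| <= k <= #|~: [set a; b]|.
  by rewrite (leq_trans (card_nonleaf_nbrs e a)) // cardsCs setCK cards2 nab.
have [S [sNS sS cardS]] := pad_subset sNab cardN.
rewrite /kgraph nab /= negbK; apply/existsP; exists S; rewrite sS cardS eqxx /=.
have [dab daS dbS aS bS] := pair_compl_disjoint nab sS.
apply: markov; rewrite -?card_gt0 ?cards1 //.
apply/(separates_singletons e aS bS); exact: nonleaf_nbrs_separate.
Qed.

End KGraph.

Theorem corollary9 (V : finType) (e : rel V)
  (CI : {set V} -> {set V} -> {set V} -> bool) :
  simple_graph e -> connected e -> ~ complete e ->
  perfectly_Markov CI e ->
  deg2G e <= #|V| - 2 ->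
  exists k : nat, [/\ 1 <= k <= #|V| - 2,
    deg2G (kgraph CI k) <= k &
    forall x y : V, kgraph CI k x y = e x y].
Proof.
move=> [esym eirr] conn ncomp pm d2V; have [markov _] := pm.
(* |V| >= 3 makes the admissible range 1 <= k <= |V| - 2 nonempty. *)
have V3 := connected_noncomplete_card eirr conn ncomp.
pose k := maxn (deg2G e) 1.
have k1 : 1 <= k by rewrite leq_maxr.
have kV : k <= #|V| - 2 by rewrite geq_max d2V subn_gt0.
have kgraphE : kgraph CI k = e.
  apply: functional_extensionality => x; apply: functional_extensionality => y.
  case exy: (e x y); first exact: kgraph_edge.
  by apply/negbTE/kgraph_nonedge; rewrite ?exy ?leq_maxl //.
exists k; rewrite kgraphE; split=> //; [by rewrite k1 kV | exact: leq_maxl].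
Qed.
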